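(* Let $p$ be an odd prime and let $k$ be an integer with $2\le k\le p-1$. Let $T$ be an orthogonal trade in $B_p$ of index $(1,k)$, let $s$ be a symbol occurring in $T$, and let $R\subseteq\mathbb{Z}_p$ be the set of rows $r$ such that $T$ contains a triple $(r,c,s)$ for some $c$. Then there exist a permutation $\phi$ of $R$ with no fixed points such that $U=\{(r,c,r+c): r\in R,\ c\in\mathbb{Z}_p\}$ is an orthogonal trade in $B_p$ of index $(1,k)$ with disjoint mate $U'=\{(r,c,\phi(r)+c): r\in R,\ c\in\mathbb{Z}_p\}$ (i.e. obtained by permuting the rows of $B_p$ indexed by $R$); in particular this trade has size $p|R|$.
   Context: All arithmetic is modulo $p$. A Latin square of order $p$ is viewed as a set of (row, column, symbol) triples in $\mathbb{Z}_p^3$. For $1\le k\le p-1$, $B_p(k)$ is the Latin square with symbol $ki+j$ in cell $(i,j)$, $i,j\in\mathbb{Z}_p$; $B_p=B_p(1)$. A Latin trade in a Latin square $L$ is a subset $T\subseteq L$ for which there is a partial Latin square $T'$ (a disjoint mate) such that $T$ and $T'$ occupy the same set of cells, $T\cap T'=\emptyset$, and each row (respectively column) of $T$ contains the same set of symbols as the corresponding row (column) of $T'$. Two Latin squares of order $p$ are orthogonal if superimposing them yields each of the $p^2$ ordered pairs exactly once. An orthogonal trade of index $(\ell,k)$ is a Latin trade $T\subseteq B_p(\ell)$ having a disjoint mate $T'$ such that $(B_p(\ell)\setminus T)\cup T'$ is orthogonal to $B_p(k)$. *)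

From HB Require Import structures.
From mathcomp Require Import all_boot all_order all_algebra all_fingroup.
Set Implicit Arguments. Unset Strict Implicit. Unset Printing Implicit Defensive.
Import GRing.Theory.
Local Open Scope ring_scope.

(* A triple ((row, column), symbol) in Z_p^3. *)
Definition triple (p : nat) := ('Z_p * 'Z_p * 'Z_p)%type.

Definition Bsq (p k : nat) : {set triple p} :=
  [set x : triple p | x.2 == (k%:R : 'Z_p) * x.1.1 + x.1.2].

Definition partial_latin (p : nat) (P : {set triple p}) : Prop :=
  forall x y, x \in P -> y \in P ->
    [/\ x.1 = y.1 -> x = y,
        x.1.1 = y.1.1 -> x.2 = y.2 -> x = y &
        x.1.2 = y.1.2 -> x.2 = y.2 -> x = y].

Definition cells (p : nat) (P : {set triple p}) : {set 'Z_p * 'Z_p} :=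
  [set x.1 | x in P].
Definition row_syms (p : nat) (P : {set triple p}) (r : 'Z_p) : {set 'Z_p} :=
  [set x.2 | x in P & x.1.1 == r].
Definition col_syms (p : nat) (P : {set triple p}) (c : 'Z_p) : {set 'Z_p} :=
  [set x.2 | x in P & x.1.2 == c].

Definition disjoint_mate (p : nat) (T T' : {set triple p}) : Prop :=
  [/\ partial_latin T',
      cells T' = cells T,
      T :&: T' = set0,
      forall r, row_syms T' r = row_syms T r &
      forall c, col_syms T' c = col_syms T c].

Definition latin_trade (p : nat) (L T : {set triple p}) : Prop :=
  T \subset L /\ exists T', disjoint_mate T T'.

Definition latin_orthogonal (p : nat) (L1 L2 : {set triple p}) : Prop :=
  forall a b : 'Z_p,
    #|[set rc : 'Z_p * 'Z_p | ((rc, a) \in L1) && ((rc, b) \in L2)]| = 1%N.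

Definition orth_trade (p l k : nat) (T : {set triple p}) : Prop :=
  T \subset Bsq p l /\
  exists T', disjoint_mate T T' /\
             latin_orthogonal ((Bsq p l :\: T) :|: T') (Bsq p k).

From HB Require Import structures.
From mathcomp Require Import all_boot all_order all_algebra all_fingroup.
From mathcomp Require Import ring.
Import GRing.Theory.
Local Open Scope ring_scope.

Set Implicit Arguments.
Unset Strict Implicit.
Unset Printing Implicit Defensive.

(* In the square L' that the trade produces from B_p, every row r contains the
   symbol s, in a unique column c(r); let phi(r) := s - c(r), the row of B_p
   having s in that column.  Since L' is again a partial Latin square, phi is
   injective and fixes exactly the rows outside R.  Since L' is orthogonal to
   B_p(k), the cells (r, c(r)) carry distinct B_p(k)-symbols k r + c(r), so
   r |-> k r - phi(r) is a bijection.  The square obtained from B_p by moving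
   row phi(r) to row r meets the pair (a, b) exactly in the row r with
   k r - phi(r) = b - a, hence is orthogonal to B_p(k). *)

Lemma latin_orthogonal_inj p (L1 L2 : {set triple p}) rc1 rc2 a b :
  latin_orthogonal L1 L2 ->
  (rc1, a) \in L1 -> (rc2, a) \in L1 -> (rc1, b) \in L2 -> (rc2, b) \in L2 ->
  rc1 = rc2.
Proof.
move=> /(_ a b) /eqP /cards1P [rc E] h1a h2a h1b h2b.
have : rc1 \in [set rc] by rewrite -E inE h1a h1b.
have : rc2 \in [set rc] by rewrite -E inE h2a h2b.
by rewrite !inE => /eqP -> /eqP ->.
Qed.

Lemma partial_latin_row_inj p (P : {set triple p}) :
  partial_latin P -> {in P &, injective (fun x => (x.1.1, x.2))}.
Proof. by move=> PL x y xP yP [rxy sxy]; case: (PL x y xP yP) => _ /(_ rxy sxy). Qed.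

Lemma partial_latin_col_inj p (P : {set triple p}) :
  partial_latin P -> {in P &, injective (fun x => (x.1.2, x.2))}.
Proof. by move=> PL x y xP yP [cxy sxy]; case: (PL x y xP yP) => _ _ /(_ cxy sxy). Qed.

Lemma partial_latin_B1 p : partial_latin (Bsq p 1).
Proof.
move=> [[r1 c1] y1] [[r2 c2] y2]; rewrite !inE /= !mul1r => /eqP -> /eqP ->.
by split=> /=; [case=> -> -> | move=> -> /addrI -> | move=> -> /addIr ->].
Qed.

Lemma mate_sym_sub p (T T' : {set triple p}) (pos : triple p -> 'Z_p) :
  (forall r, [set x.2 | x in T' & pos x == r] = [set x.2 | x in T & pos x == r]) ->
  [set (pos x, x.2) | x in T'] \subset [set (pos x, x.2) | x in T].
Proof.
move=> syms; apply/subsetP => _ /imsetP [x xT' ->].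
have /setP /(_ x.2) := syms (pos x).
rewrite imset_f ?inE ?xT' ?eqxx // => /esym.
by case/imsetP=> z; rewrite inE => /andP [zT /eqP <-] ->; rewrite imset_f.
Qed.

Section TradeResult.
Variables (p : nat) (L T T' : {set triple p}).
Hypothesis sTL : T \subset L.
Let L' := (L :\: T) :|: T'.

Lemma trade_key_inj (K : finType) (key : triple p -> K) :
  {in L &, injective key} -> {in T' &, injective key} ->
  key @: T' \subset key @: T -> {in L' &, injective key}.
Proof.
move=> injL injT' subT.
(* A clash between T' and L :\: T transfers, through T, to a clash inside L. *)
have mixed x y : x \in T' -> y \in L :\: T -> key x = key y -> x = y.
  move=> xT' /setDP [yL yT] kxy.
  have /imsetP [z zT kz] : key x \in key @: T by apply: (subsetP subT); exact: imset_f.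
  have zy : z = y by apply: injL => //; [exact: (subsetP sTL) | rewrite -kz].
  by rewrite -zy zT in yT.
have inL x : x \in L :\: T -> x \in L by case/setDP.
move=> x y; rewrite !in_setU => /orP [xL | xT'] /orP [yL | yT'] kxy.
- exact: injL (inL x xL) (inL y yL) kxy.
- exact/esym/(mixed y x yT' xL).
- exact: mixed.
- exact: injT'.
Qed.

Hypothesis mateT : disjoint_mate T T'.

Lemma trade_notin x : x \in T -> x \notin L'.
Proof.
case: mateT => _ _ TT' _ _ xT; rewrite in_setU in_setD xT /=.
by apply/negP => xT'; move/setP: TT' => /(_ x); rewrite !inE xT xT'.
Qed.

Lemma trade_row_sym r c y : ((r, c), y) \in L -> exists c', ((r, c'), y) \in L'.
Proof.
move=> xL; have [xT | xT] := boolP (((r, c), y) \in T); last first.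
  by exists c; rewrite !inE xT xL.
case: mateT => _ _ _ rows _.
have : y \in row_syms T r by apply/imsetP; exists ((r, c), y); rewrite // inE xT eqxx.
rewrite -rows => /imsetP [[[r' c'] y']]; rewrite inE => /andP [x'T' /eqP /= Er] /= Ey.
by exists c'; rewrite inE -Er Ey x'T' orbT.
Qed.

Lemma trade_row_inj :
  partial_latin L -> {in L' &, injective (fun x => (x.1.1, x.2))}.
Proof.
case: mateT => plT' _ _ rows _ plL.
apply: trade_key_inj; [exact: partial_latin_row_inj | exact: partial_latin_row_inj |].
exact: (@mate_sym_sub _ T T' (fun x => x.1.1) rows).
Qed.

Lemma trade_col_inj :
  partial_latin L -> {in L' &, injective (fun x => (x.1.2, x.2))}.
Proof.
case: mateT => plT' _ _ _ cols plL.
apply: trade_key_inj; [exact: partial_latin_col_inj | exact: partial_latin_col_inj |].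
exact: (@mate_sym_sub _ T T' (fun x => x.1.2) cols).
Qed.

End TradeResult.

Section RowShift.
Variable p : nat.

Definition row_shift (R : {set 'Z_p}) (g : 'Z_p -> 'Z_p) : {set triple p} :=
  [set x : triple p | (x.1.1 \in R) && (x.2 == g x.1.1 + x.1.2)].

Definition Bsq_rows (g : 'Z_p -> 'Z_p) : {set triple p} :=
  [set x : triple p | x.2 == g x.1.1 + x.1.2].

Lemma row_shift_sub_B1 R : row_shift R id \subset Bsq p 1.
Proof. by apply/subsetP => x; rewrite !inE mul1r => /andP []. Qed.

Lemma cells_row_shift R g : cells (row_shift R g) = [set rc | rc.1 \in R].
Proof.
apply/setP => [[r c]]; rewrite inE; apply/imsetP/idP => [[x] | rR].
  by rewrite inE => /andP [xR _] ->.
by exists ((r, c), g r + c); rewrite // inE rR eqxx.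
Qed.

Lemma row_syms_row_shift R g r :
  row_syms (row_shift R g) r = if r \in R then setT else set0.
Proof.
apply/setP => y; case: ifP => rR; rewrite !inE.
  apply/imsetP; exists ((r, y - g r), y) => //.
  by rewrite !inE /= rR eqxx andbT; apply/eqP; ring.
apply/imsetP => [[x]]; rewrite !inE => /andP [/andP [xR _] /eqP xr] _.
by rewrite xr rR in xR.
Qed.

Lemma col_syms_row_shift R g c :
  col_syms (row_shift R g) c = [set y + c | y in g @: R].
Proof.
rewrite -imset_comp; apply/setP => y; apply/imsetP/imsetP => [[x] | [r rR ->]].
  by rewrite !inE => /andP [/andP [xR /eqP ->] /eqP ->] ->; exists x.1.1.
by exists ((r, c), g r + c); rewrite // !inE rR !eqxx.
Qed.

Lemma partial_latin_row_shift R g : injective g -> partial_latin (row_shift R g).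
Proof.
move=> g_inj [[r1 c1] y1] [[r2 c2] y2]; rewrite !inE /= => /andP [_ /eqP ->] /andP [_ /eqP ->].
by split=> /=; [case=> -> -> | move=> -> /addrI -> | move=> -> /addIr /g_inj ->].
Qed.

Lemma row_shift_mate R (phi : {perm 'Z_p}) :
  perm_on R phi -> {in R, forall r, phi r != r} ->
  disjoint_mate (row_shift R id) (row_shift R phi).
Proof.
move=> phiR phi_fix; split.
- exact/partial_latin_row_shift/perm_inj.
- by rewrite !cells_row_shift.
- apply/setP => [[[r c] y]]; rewrite !inE /=; apply/negP.
  case/andP=> /andP [rR /eqP ->] /andP [_ /eqP /addIr rphi].
  by move: (phi_fix r rR); rewrite -rphi eqxx.
- by move=> r; rewrite !row_syms_row_shift.
- by move=> c; rewrite !col_syms_row_shift im_perm_on // imset_id.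
Qed.

Lemma B1_row_shift_trade R (phi : {perm 'Z_p}) :
  perm_on R phi -> (Bsq p 1 :\: row_shift R id) :|: row_shift R phi = Bsq_rows phi.
Proof.
move=> phiR; apply/setP => [[[r c] y]]; rewrite !inE /= mul1r.
have [rR | rR] := boolP (r \in R); first by rewrite andNb.
by rewrite orbF (out_perm phiR rR).
Qed.

Lemma Bsq_rows_orthogonal k g :
  injective (fun r => k%:R * r - g r) -> latin_orthogonal (Bsq_rows g) (Bsq p k).
Proof.
move=> f_inj a b; have [h _ hK] := injF_bij f_inj.
set r0 := h (b - a); have f_r0 : k%:R * r0 - g r0 = b - a := hK (b - a).
apply/eqP/cards1P; exists (r0, a - g r0); apply/setP => [[r c]].
rewrite !inE /=; apply/andP/eqP => [[/eqP ea /eqP eb] | [-> ->]].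
  have /f_inj <- : k%:R * r - g r = k%:R * r0 - g r0 by rewrite f_r0 ea eb; ring.
  by rewrite ea; congr pair; ring.
split; apply/eqP; first by ring.
by rewrite -[b](subrK a) -f_r0; ring.
Qed.

Lemma card_row_shift R g : (1 < p)%N -> #|row_shift R g| = (p * #|R|)%N.
Proof.
move=> p_gt1.
have -> : row_shift R g = [set (rc, g rc.1 + rc.2) | rc in setX R setT].
  apply/setP => [[[r c] y]]; rewrite !inE /=; apply/idP/imsetP.
    by case/andP=> rR /eqP ->; exists (r, c); rewrite // !inE rR.
  by case=> -[r' c']; rewrite !inE /= andbT => rR [-> -> ->]; rewrite rR eqxx.
rewrite card_imset; last by move=> x1 x2 [].
by rewrite cardsX cardsT card_ord mulnC; congr (_ * _)%N; exact: Zp_cast.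
Qed.

End RowShift.

Section SymbolRows.
Variables (p k : nat) (T T' : {set triple p}) (s : 'Z_p).
Hypotheses (sTB : T \subset Bsq p 1) (mateT : disjoint_mate T T').
Let L' := (Bsq p 1 :\: T) :|: T'.
Let R := [set r : 'Z_p | [exists c, ((r, c), s) \in T]].

(* The default [0] is never used: see [scolP]. *)
Definition scol r := odflt 0 [pick c | ((r, c), s) \in L'].
Definition srow r := s - scol r.

Lemma B1_sym_cell r : ((r, s - r), s) \in Bsq p 1.
Proof. by rewrite inE /= mul1r addrC subrK. Qed.

Lemma scolP r : ((r, scol r), s) \in L'.
Proof.
rewrite /scol; case: pickP => [c // | noc].
by have [c] := trade_row_sym mateT (B1_sym_cell r); rewrite noc.
Qed.

Lemma srow_inj : injective srow.
Proof.
move=> r1 r2 /(congr1 (fun y => s - y)); rewrite !subKr => e.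
have := trade_col_inj sTB mateT (@partial_latin_B1 p) (scolP r1) (scolP r2).
by rewrite /= e => /(_ erefl) [].
Qed.

Lemma srow_out r : r \notin R -> srow r = r.
Proof.
move=> rR; have rL : ((r, s - r), s) \in L'.
  rewrite in_setU in_setD B1_sym_cell andbT; apply/orP; left; apply: contra rR => rT.
  by rewrite inE; apply/existsP; exists (s - r).
have := trade_row_inj sTB mateT (@partial_latin_B1 p) (scolP r) rL.
by rewrite /srow => /(_ erefl) [->]; rewrite subKr.
Qed.

Lemma srow_in r : r \in R -> srow r != r.
Proof.
rewrite inE => /existsP [c rT]; apply/eqP => srow_r.
have ec : c = scol r.
  move/(subsetP sTB): rT; rewrite inE /= mul1r => /eqP sE.
  by rewrite -[scol r](subKr s) -/(srow r) srow_r sE; ring.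
by move: (scolP r); rewrite -ec; apply/negP/trade_notin.
Qed.

Hypothesis orthL : latin_orthogonal L' (Bsq p k).

Lemma srow_orth : injective (fun r => k%:R * r - srow r).
Proof.
move=> r1 r2 /= e.
have Bk r : ((r, scol r), k%:R * r - srow r + s) \in Bsq p k.
  by rewrite inE /srow /=; apply/eqP; ring.
have := latin_orthogonal_inj orthL (scolP r1) (scolP r2) (Bk r1).
by rewrite e => /(_ (Bk r2)) [].
Qed.

End SymbolRows.

Theorem theorem4p1 (p k : nat) (T : {set triple p}) (s : 'Z_p) :
  prime p -> odd p -> (2 <= k <= p.-1)%N ->
  orth_trade 1 k T ->
  (exists rc : 'Z_p * 'Z_p, (rc, s) \in T) ->
  let R := [set r : 'Z_p | [exists c : 'Z_p, ((r, c), s) \in T]] in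
  exists phi : {perm 'Z_p},
    [/\ perm_on R phi,
        (forall r, r \in R -> phi r != r) &
    let U := [set x : triple p | (x.1.1 \in R) && (x.2 == x.1.1 + x.1.2)] in
    let U' := [set x : triple p | (x.1.1 \in R) && (x.2 == phi x.1.1 + x.1.2)] in
    [/\ U \subset Bsq p 1,
        disjoint_mate U U',
        latin_orthogonal ((Bsq p 1 :\: U) :|: U') (Bsq p k) &
        #|U| = (p * #|R|)%N]].
Proof.
move=> p_prime _ _ [sTB [T' [mateT orthL]]] _ R.
pose phi := perm (srow_inj (s := s) sTB mateT).
have phiE r : phi r = srow T T' s r by rewrite permE.
have phiR : perm_on R phi.
  by apply/subsetP => r; rewrite inE phiE; apply: contraR => /srow_out ->.
have phi_fix : {in R, forall r, phi r != r} by move=> r; rewrite phiE; apply: srow_in.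
exists phi; split => // U U'; split.
- exact: row_shift_sub_B1.
- exact: row_shift_mate.
- rewrite B1_row_shift_trade //; apply: Bsq_rows_orthogonal => r1 r2.
  by rewrite /= !phiE; apply: srow_orth.
- exact: (card_row_shift R id (prime_gt1 p_prime)).
Qed.
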